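(* Let $T:X\rightrightarrows X^*$ be a monotone operator on a real Banach space $X$, let $i\in\{0,1\}$, let $C\in\mathcal C_i(T)$ and $K\in\mathcal C_0(T+\partial I_C)$; if $i=0$ assume also that $\overline{D_T}$ is convex. Then $C\cap K\in\mathcal C_i(T)$.
   Context: $I_C$ is the indicator function of $C$ and $\partial I_C$ its normal cone operator; $(T+\partial I_C)(x)=T(x)+\partial I_C(x)$, so $D_{T+\partial I_C}=D_T\cap C$. For an operator $S$, $\mathcal C_0(S)=\{C\subset X: C$ closed, convex, $D_S\cap\mathrm{int}\,C\ne\emptyset\}$ and $\mathcal C_1(S)=\{C\subset X: C$ closed, convex, and $\bigcup_{\lambda>0}\lambda(\mathrm{co}\,D_S-C)$ is a closed subspace of $X\}$. *)

From Stdlib Require Import Reals.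
Open Scope R_scope.

Record RBanach := {
  bs_car :> Type;
  bs_zero : bs_car;
  bs_add : bs_car -> bs_car -> bs_car;
  bs_opp : bs_car -> bs_car;
  bs_scal : R -> bs_car -> bs_car;
  bs_norm : bs_car -> R;
  bs_add_assoc : forall x y z, bs_add x (bs_add y z) = bs_add (bs_add x y) z;
  bs_add_comm : forall x y, bs_add x y = bs_add y x;
  bs_add_0 : forall x, bs_add x bs_zero = x;
  bs_add_opp : forall x, bs_add x (bs_opp x) = bs_zero;
  bs_scal_assoc : forall a b x, bs_scal a (bs_scal b x) = bs_scal (a * b) x;
  bs_scal_1 : forall x, bs_scal 1 x = x;
  bs_scal_distr_l : forall a x y, bs_scal a (bs_add x y) = bs_add (bs_scal a x) (bs_scal a y);
  bs_scal_distr_r : forall a b x, bs_scal (a + b) x = bs_add (bs_scal a x) (bs_scal b x);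
  bs_norm_eq0 : forall x, bs_norm x = 0 -> x = bs_zero;
  bs_norm_triangle : forall x y, bs_norm (bs_add x y) <= bs_norm x + bs_norm y;
  bs_norm_scal : forall a x, bs_norm (bs_scal a x) = Rabs a * bs_norm x;
  bs_complete : forall u : nat -> bs_car,
    (forall eps, 0 < eps -> exists N, forall m n, (N <= m)%nat -> (N <= n)%nat ->
        bs_norm (bs_add (u m) (bs_opp (u n))) < eps) ->
    exists l, forall eps, 0 < eps -> exists N, forall n, (N <= n)%nat ->
        bs_norm (bs_add (u n) (bs_opp l)) < eps
}.

Arguments bs_zero {_}.
Arguments bs_add {_} _ _.
Arguments bs_opp {_} _.
Arguments bs_scal {_} _ _.
Arguments bs_norm {_} _.

Definition bs_sub {X : RBanach} (x y : X) : X := bs_add x (bs_opp y).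

Record dual (X : RBanach) := {
  df :> X -> R;
  df_add : forall x y, df (bs_add x y) = df x + df y;
  df_scal : forall a x, df (bs_scal a x) = a * df x;
  df_bounded : exists M, forall x, Rabs (df x) <= M * bs_norm x
}.

Definition operator (X : RBanach) := X -> dual X -> Prop.

Definition monotone {X : RBanach} (T : operator X) : Prop :=
  forall x y (xs ys : dual X), T x xs -> T y ys ->
    0 <= xs (bs_sub x y) - ys (bs_sub x y).

Definition dom {X : RBanach} (S : operator X) : X -> Prop :=
  fun x => exists xs, S x xs.

Definition closure {X : RBanach} (A : X -> Prop) : X -> Prop :=
  fun x => forall eps, 0 < eps -> exists y, A y /\ bs_norm (bs_sub x y) < eps.

Definition is_closed {X : RBanach} (A : X -> Prop) : Prop :=
  forall x, closure A x -> A x.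

Definition interior {X : RBanach} (A : X -> Prop) : X -> Prop :=
  fun x => exists eps, 0 < eps /\ forall y, bs_norm (bs_sub y x) < eps -> A y.

Definition convex {X : RBanach} (A : X -> Prop) : Prop :=
  forall x y t, 0 <= t <= 1 -> A x -> A y ->
    A (bs_add (bs_scal t x) (bs_scal (1 - t) y)).

Definition conv_hull {X : RBanach} (A : X -> Prop) : X -> Prop :=
  fun x => forall S, convex S -> (forall y, A y -> S y) -> S x.

Definition is_subspace {X : RBanach} (A : X -> Prop) : Prop :=
  A bs_zero /\ (forall x y, A x -> A y -> A (bs_add x y)) /\
  (forall a x, A x -> A (bs_scal a x)).

Definition closed_subspace {X : RBanach} (A : X -> Prop) : Prop :=
  is_subspace A /\ is_closed A.

(** Normal cone operator ∂I_C (empty outside C). *)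
Definition normal_cone {X : RBanach} (C : X -> Prop) : operator X :=
  fun x xs => C x /\ forall y, C y -> xs (bs_sub y x) <= 0.

Definition op_sum {X : RBanach} (S1 S2 : operator X) : operator X :=
  fun x zs => exists us vs, S1 x us /\ S2 x vs /\ forall y, zs y = us y + vs y.

Definition cone_gen {X : RBanach} (S : operator X) (C : X -> Prop) : X -> Prop :=
  fun z => exists l a c, 0 < l /\ conv_hull (dom S) a /\ C c /\
    z = bs_scal l (bs_sub a c).

Definition calC0 {X : RBanach} (S : operator X) (C : X -> Prop) : Prop :=
  is_closed C /\ convex C /\ exists x, dom S x /\ interior C x.

Definition calC1 {X : RBanach} (S : operator X) (C : X -> Prop) : Prop :=
  is_closed C /\ convex C /\ closed_subspace (cone_gen S C).

Definition calC (i : nat) {X : RBanach} (S : operator X) (C : X -> Prop) : Prop :=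
  match i with 0%nat => calC0 S C | _ => calC1 S C end.

Definition setI {X : Type} (A B : X -> Prop) : X -> Prop := fun x => A x /\ B x.

(* Everything rests on one observation: a point x1 of D_{T+∂I_C} = D_T ∩ C
   lies in the interior of K, say with ball B(x1, r1) ⊆ K.  Moving a point
   of C a small fraction of the way towards x1 keeps it in C (convexity)
   and brings it into B(x1, r1), hence into C ∩ K.
   - i = 0: with B(x0, r0) ⊆ C and x0 ∈ D_T, the point z = t x0 + (1-t) x1
     for small t > 0 has a ball of radius t r0 inside C and is close to x1,
     so a whole ball around z lies in C ∩ K; z belongs to the convex set
     cl D_T, so a point of D_T can be picked inside that ball.
   - i = 1: every generator λ(a - c) of ⋃ λ(co D_T - C) is rewritten as
     (λ/s)(a' - c') with a' = s a + (1-s) x1 ∈ co D_T and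
     c' = s c + (1-s) x1 ∈ C ∩ K, so the cone generated with C ∩ K equals
     the one generated with C, which is a closed subspace by hypothesis. *)

From Stdlib Require Import Reals Lra.
Open Scope R_scope.

Definition comb {X : RBanach} (s : R) (u v : X) : X :=
  bs_add (bs_scal s u) (bs_scal (1 - s) v).

Section VectorAlgebra.

Variable X : RBanach.

Lemma add0l (x : X) : bs_add bs_zero x = x.
Proof. rewrite bs_add_comm; apply bs_add_0. Qed.

Lemma add_swap (x y z : X) : bs_add x (bs_add y z) = bs_add y (bs_add x z).
Proof. rewrite !bs_add_assoc, (bs_add_comm _ x y). reflexivity. Qed.

Lemma add_cancel (x y z : X) : bs_add x y = bs_add x z -> y = z.
Proof.
  intros H.
  assert (H2 : bs_add (bs_opp x) (bs_add x y) = bs_add (bs_opp x) (bs_add x z))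
    by (rewrite H; reflexivity).
  rewrite !bs_add_assoc, (bs_add_comm _ (bs_opp x) x), bs_add_opp, !add0l in H2.
  exact H2.
Qed.

Lemma scal0 (x : X) : bs_scal 0 x = bs_zero.
Proof.
  symmetry; apply (add_cancel (bs_scal 0 x)).
  rewrite bs_add_0, <- bs_scal_distr_r. f_equal; ring.
Qed.

(* The opposite is the scalar multiple by -1; this reduces all sign
   manipulations to the scalar axioms. *)
Lemma opp_scal (x : X) : bs_opp x = bs_scal (-1) x.
Proof.
  apply (add_cancel x). rewrite bs_add_opp.
  rewrite <- (bs_scal_1 X x) at 1. rewrite <- bs_scal_distr_r.
  replace (1 + -1) with 0 by ring. symmetry; apply scal0.
Qed.

Lemma scal_opp (a : R) (x : X) : bs_scal a (bs_opp x) = bs_opp (bs_scal a x).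
Proof. rewrite !opp_scal, !bs_scal_assoc. f_equal; ring. Qed.

Lemma opp_add (x y : X) : bs_opp (bs_add x y) = bs_add (bs_opp x) (bs_opp y).
Proof. rewrite !opp_scal. apply bs_scal_distr_l. Qed.

Lemma opp_opp (x : X) : bs_opp (bs_opp x) = x.
Proof. rewrite !opp_scal, bs_scal_assoc. replace (-1 * -1) with 1 by ring. apply bs_scal_1. Qed.

Lemma norm_opp (x : X) : bs_norm (bs_opp x) = bs_norm x.
Proof. rewrite opp_scal, bs_norm_scal, Rabs_left by lra. ring. Qed.

Lemma norm_zero : bs_norm (@bs_zero X) = 0.
Proof. rewrite <- (scal0 bs_zero), bs_norm_scal, Rabs_R0. ring. Qed.

Lemma norm_nonneg (x : X) : 0 <= bs_norm x.
Proof.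
  pose proof (bs_norm_triangle X x (bs_opp x)) as H.
  rewrite bs_add_opp, norm_zero, norm_opp in H. lra.
Qed.

Lemma norm_sub_sym (z w : X) : bs_norm (bs_sub z w) = bs_norm (bs_sub w z).
Proof.
  rewrite <- norm_opp. unfold bs_sub. rewrite opp_add, opp_opp, bs_add_comm.
  reflexivity.
Qed.

Lemma dist_triangle (y z w : X) :
  bs_norm (bs_sub y z) <= bs_norm (bs_sub y w) + bs_norm (bs_sub w z).
Proof.
  replace (bs_sub y z) with (bs_add (bs_sub y w) (bs_sub w z)) by
    (unfold bs_sub; rewrite <- bs_add_assoc, (bs_add_assoc _ (bs_opp w)),
       (bs_add_comm _ (bs_opp w) w), bs_add_opp, add0l; reflexivity).
  apply bs_norm_triangle.
Qed.

Lemma comb_sub (s : R) (u v w : X) :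
  bs_sub (comb s u w) (comb s v w) = bs_scal s (bs_sub u v).
Proof.
  unfold comb, bs_sub. rewrite opp_add, bs_scal_distr_l, scal_opp, <- bs_add_assoc.
  f_equal. rewrite add_swap, bs_add_opp, bs_add_0. reflexivity.
Qed.

Lemma comb_same (s : R) (x : X) : comb s x x = x.
Proof.
  unfold comb. rewrite <- bs_scal_distr_r. replace (s + (1 - s)) with 1 by ring.
  apply bs_scal_1.
Qed.

Lemma comb_translate (t : R) (u v d : X) :
  t <> 0 -> comb t (bs_add u (bs_scal (1 / t) d)) v = bs_add (comb t u v) d.
Proof.
  intros ht. unfold comb. rewrite bs_scal_distr_l, bs_scal_assoc.
  replace (t * (1 / t)) with 1 by (field; exact ht). rewrite bs_scal_1.
  rewrite <- !bs_add_assoc, (bs_add_comm _ d). reflexivity.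
Qed.

Lemma add_sub_cancel (z y : X) : bs_add z (bs_sub y z) = y.
Proof. unfold bs_sub. rewrite add_swap, bs_add_opp, bs_add_0. reflexivity. Qed.

Lemma sub_add_cancel (a b : X) : bs_sub (bs_add a b) a = b.
Proof. rewrite bs_add_comm. unfold bs_sub. rewrite <- bs_add_assoc, bs_add_opp, bs_add_0. reflexivity. Qed.

End VectorAlgebra.

Section Geometry.

Variable X : RBanach.

Lemma closed_setI (C K : X -> Prop) :
  is_closed C -> is_closed K -> is_closed (setI C K).
Proof.
  intros hC hK x hx. split.
  - apply hC. intros e he. destruct (hx e he) as [y [[h1 _] h3]]. eauto.
  - apply hK. intros e he. destruct (hx e he) as [y [[_ h2] h3]]. eauto.
Qed.

Lemma convex_setI (C K : X -> Prop) :
  convex C -> convex K -> convex (setI C K).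
Proof. intros hC hK x y t ht [] []. split; auto. Qed.

Lemma closed_subspace_ext (A B : X -> Prop) :
  (forall z, A z <-> B z) -> closed_subspace B -> closed_subspace A.
Proof.
  intros E [[H0 [Hadd Hsc]] Hcl]. split; [split; [|split]|].
  - apply E; auto.
  - intros x y hx hy; apply E; apply Hadd; apply E; auto.
  - intros a x hx; apply E; apply Hsc; apply E; auto.
  - intros x hx. apply E, Hcl. intros e he. destruct (hx e he) as [y [hy hn]].
    exists y; split; auto; apply E; auto.
Qed.

Lemma hull_convex (A : X -> Prop) : convex (conv_hull A).
Proof. intros x y t ht hx hy S hS hA. apply hS; [exact ht | apply hx | apply hy]; auto. Qed.

Lemma hull_incl (A : X -> Prop) (x : X) : A x -> conv_hull A x.
Proof. intros H S _ hA; auto. Qed.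

Lemma closure_incl (A : X -> Prop) (x : X) : A x -> closure A x.
Proof.
  intros H e he. exists x. split; [exact H|].
  unfold bs_sub. rewrite bs_add_opp, norm_zero. exact he.
Qed.

Lemma comb_near_end (u v : X) (r : R) :
  0 < r -> exists s, 0 < s <= 1 /\ bs_norm (bs_sub (comb s u v) v) < r.
Proof.
  intros hr. set (N := bs_norm (bs_sub u v)).
  assert (hN : 0 <= N) by apply norm_nonneg.
  exists (r / (r + N)). split; [split|].
  - apply Rdiv_lt_0_compat; lra.
  - apply Rmult_le_reg_r with (r := r + N); [lra|]. field_simplify; lra.
  - rewrite <- (comb_same X (r / (r + N)) v) at 2.
    rewrite comb_sub, bs_norm_scal, Rabs_pos_eq; fold N.
    + apply Rmult_lt_reg_r with (r := r + N); [lra|]. field_simplify; nra.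
    + apply Rlt_le, Rdiv_lt_0_compat; lra.
Qed.

(* If the convex set C contains the ball B(x0, r0) and the point x1, then it
   contains the ball B(t x0 + (1-t) x1, t r0) for 0 < t <= 1: the ball is
   the image of B(x0, r0) under the homothety of centre x1 and ratio t. *)
Lemma ball_toward_interior (C : X -> Prop) (x0 x1 : X) (r0 t : R) :
  convex C ->
  (forall y, bs_norm (bs_sub y x0) < r0 -> C y) ->
  C x1 -> 0 < t <= 1 ->
  forall y, bs_norm (bs_sub y (comb t x0 x1)) < t * r0 -> C y.
Proof.
  intros HCv Hball Cx1 ht y Hy.
  set (d := bs_sub y (comb t x0 x1)).
  set (x' := bs_add x0 (bs_scal (1 / t) d)).
  assert (Cx' : C x').
  { apply Hball. unfold x'.
    rewrite sub_add_cancel, bs_norm_scal, Rabs_pos_eq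
      by (apply Rlt_le, Rdiv_lt_0_compat; lra).
    apply Rmult_lt_reg_l with (r := t); [lra|].
    replace (t * (1 / t * bs_norm d)) with (bs_norm d) by (field; lra).
    exact Hy. }
  replace y with (comb t x' x1).
  - apply HCv; [lra | exact Cx' | exact Cx1].
  - unfold x'. rewrite comb_translate by lra. apply add_sub_cancel.
Qed.

Lemma interior_point_setI (D C K : X -> Prop) (x0 x1 : X) (r0 r1 : R) :
  convex (closure D) -> convex C ->
  D x0 -> 0 < r0 -> (forall y, bs_norm (bs_sub y x0) < r0 -> C y) ->
  D x1 -> C x1 -> 0 < r1 -> (forall y, bs_norm (bs_sub y x1) < r1 -> K y) ->
  exists w, D w /\ interior (setI C K) w.
Proof.
  intros HD HCv Dx0 hr0 Hr0 Dx1 Cx1 hr1 Hr1.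
  destruct (comb_near_end x0 x1 (r1 / 2)) as [t [ht Hzx1]]; [lra|].
  set (z := comb t x0 x1) in *.
  assert (Hz : closure D z)
    by (apply HD; [lra | apply closure_incl; exact Dx0 | apply closure_incl; exact Dx1]).
  set (rho := Rmin (t * r0) (r1 / 2)).
  assert (hrho : 0 < rho) by (apply Rmin_pos; nra).
  assert (Hrho0 : rho <= t * r0) by apply Rmin_l.
  assert (Hrho1 : rho <= r1 / 2) by apply Rmin_r.
  destruct (Hz (rho / 2)) as [w [Dw Hzw]]; [lra|].
  exists w. split; [exact Dw|]. exists (rho / 2). split; [lra|].
  intros y Hyw.
  assert (Hyz : bs_norm (bs_sub y z) < rho).
  { pose proof (dist_triangle X y z w). rewrite (norm_sub_sym X w z) in H. lra. }
  split.
  - apply (ball_toward_interior C x0 x1 r0 t HCv Hr0 Cx1 ht). fold z. lra.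
  - apply Hr1. pose proof (dist_triangle X y x1 z). lra.
Qed.

Lemma cone_gen_setI (T : operator X) (C K : X -> Prop) (x1 : X) (r1 : R) :
  convex C -> dom T x1 -> C x1 -> 0 < r1 ->
  (forall y, bs_norm (bs_sub y x1) < r1 -> K y) ->
  forall z, cone_gen T (setI C K) z <-> cone_gen T C z.
Proof.
  intros HCv Dx1 Cx1 hr1 Hr1 z. split.
  - intros [l [a [c [hl [ha [[hc _] hz]]]]]]. exists l, a, c. auto.
  - intros [l [a [c [hl [ha [hc hz]]]]]].
    destruct (comb_near_end c x1 r1 hr1) as [s [hs Hs]].
    exists (l / s), (comb s a x1), (comb s c x1).
    split; [apply Rdiv_lt_0_compat; lra|].
    split; [apply hull_convex; [lra | exact ha | apply hull_incl; exact Dx1]|].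
    split; [split; [apply HCv; auto; lra | apply Hr1; exact Hs]|].
    rewrite comb_sub, bs_scal_assoc. replace (l / s * s) with l by (field; lra).
    exact hz.
Qed.

Lemma dom_sum_normal_cone (T : operator X) (C : X -> Prop) (x : X) :
  dom (op_sum T (normal_cone C)) x -> dom T x /\ C x.
Proof. intros [zs [us [vs [Tu [[Cx _] _]]]]]. split; [exists us|]; assumption. Qed.

End Geometry.

Theorem lemma2p10 (X : RBanach) (T : operator X) (i : nat) (C K : X -> Prop) :
  monotone T ->
  (i = 0%nat \/ i = 1%nat) ->
  calC i T C ->
  calC0 (op_sum T (normal_cone C)) K ->
  (i = 0%nat -> convex (closure (dom T))) ->
  calC i T (setI C K).
Proof.
  intros _ Hi HC [HKc [HKv [x1 [Dx1 [r1 [hr1 Hr1]]]]]] Hconv.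
  destruct (dom_sum_normal_cone X T C x1 Dx1) as [DTx1 Cx1].
  destruct Hi as [-> | ->]; simpl in *.
  - destruct HC as [HCc [HCv [x0 [Dx0 [r0 [hr0 Hr0]]]]]].
    split; [apply closed_setI; auto|]. split; [apply convex_setI; auto|].
    exact (interior_point_setI X (dom T) C K x0 x1 r0 r1
             (Hconv eq_refl) HCv Dx0 hr0 Hr0 DTx1 Cx1 hr1 Hr1).
  - destruct HC as [HCc [HCv HCs]].
    split; [apply closed_setI; auto|]. split; [apply convex_setI; auto|].
    exact (closed_subspace_ext X _ _ (cone_gen_setI X T C K x1 r1 HCv DTx1 Cx1 hr1 Hr1) HCs).
Qed.
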